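(* Let $\mathbb{M}^3$ be either the Euclidean space $\mathbb{R}^3$ or the round unit sphere $\mathbb{S}^3$. Then every complete end of revolution in $\mathbb{M}^3$ is a parabolic end.
   Context: Let $\mathbb{M}^3(\kappa)$ denote the simply connected $3$-dimensional space form of constant sectional curvature $\kappa$. A complete end of revolution in $\mathbb{M}^3(\kappa)$ is defined as follows: take a geodesic $\sigma$ of $\mathbb{M}^3(\kappa)$, a totally geodesic surface $\mathbb{M}^2(\kappa)\subset\mathbb{M}^3(\kappa)$ containing $\sigma$, and a smooth regular curve $\beta:[0,\infty)\to\mathbb{M}^2(\kappa)$ of infinite length which does not intersect $\sigma$ (so $\beta$ lies in one open half of $\mathbb{M}^2(\kappa)\setminus\sigma$). The end is $E=\{R_\theta(\beta(t)) : t\ge 0,\ \theta\in[0,2\pi)\}$, where $\{R_\theta\}$ is the group (isomorphic to $SO(2)$) of orientation-preserving isometries of $\mathbb{M}^3(\kappa)$ fixing $\sigma$ pointwise; it is the image of the immersion $(t,\theta)\mapsto R_\theta(\beta(t))$ of $[0,\infty)\times\mathbb{S}^1$ and carries the induced Riemannian metric. An end $E$ (a surface with compact boundary) is parabolic if every bounded harmonic function on $E$ is determined by its boundary values. *)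

From HB Require Import structures.
From mathcomp Require Import all_boot all_order all_algebra.
From mathcomp Require Import all_classical all_reals all_analysis.
Set Implicit Arguments. Unset Strict Implicit. Unset Printing Implicit Defensive.
Import Order.TTheory GRing.Theory Num.Theory.
Import numFieldNormedType.Exports.
Local Open Scope classical_set_scope.
Local Open Scope ring_scope.

Section Defs.
Variable R : realType.

Definition dotv (N : nat) (u v : 'I_N -> R) : R := \sum_(i < N) u i * v i.

Definition orthonormal3 (e1 e2 e3 : 'I_3 -> R) : Prop :=
  [/\ dotv e1 e1 = 1, dotv e2 e2 = 1, dotv e3 e3 = 1 &
   [/\ dotv e1 e2 = 0, dotv e1 e3 = 0 & dotv e2 e3 = 0]].

Definition orthonormal4 (e1 e2 e3 e4 : 'I_4 -> R) : Prop :=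
  [/\ dotv e1 e1 = 1, dotv e2 e2 = 1, dotv e3 e3 = 1, dotv e4 e4 = 1 &
   [/\ dotv e1 e2 = 0, dotv e1 e3 = 0, dotv e1 e4 = 0,
       dotv e2 e3 = 0 & [/\ dotv e2 e4 = 0 & dotv e3 e4 = 0]]].

Definition smooth_fun (f : R -> R) : Prop :=
  forall (n : nat) (x : R), derivable (iter n (@derive1 R R) f) x 1.

Definition smooth_curve (N : nat) (beta : R -> 'I_N -> R) : Prop :=
  forall i : 'I_N, smooth_fun (fun t => beta t i).

Definition velocity (N : nat) (beta : R -> 'I_N -> R) (t : R) : 'I_N -> R :=
  fun i => derive1 (fun s => beta s i) t.

Definition speed (N : nat) (beta : R -> 'I_N -> R) (t : R) : R :=
  Num.sqrt (dotv (velocity beta t) (velocity beta t)).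

Definition regular_curve (N : nat) (beta : R -> 'I_N -> R) : Prop :=
  forall t, 0 <= t -> velocity beta t <> (fun _ => 0).

Definition infinite_length (N : nat) (beta : R -> 'I_N -> R) : Prop :=
  (\int[lebesgue_measure]_(t in `[0%R, +oo[%classic) (speed beta t)%:E = +oo)%E.

(** ---------- Euclidean space R^3 ----------
   The geodesic sigma = { p + s e3 | s in R }, the totally geodesic plane
   M^2 = { p + a e1 + s e3 } containing it, and R_theta the rotation of
   angle theta about sigma (in the oriented plane spanned by e1, e2). *)
Definition rotE (p e1 e2 e3 : 'I_3 -> R) (th : R) (q : 'I_3 -> R) : 'I_3 -> R :=
  let c1 := dotv (fun k => q k - p k) e1 in
  let c2 := dotv (fun k => q k - p k) e2 in
  let c3 := dotv (fun k => q k - p k) e3 in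
  fun k => p k + (c1 * cos th - c2 * sin th) * e1 k
               + (c1 * sin th + c2 * cos th) * e2 k + c3 * e3 k.

Definition euclid_end_data (p e1 e2 e3 : 'I_3 -> R) (beta : R -> 'I_3 -> R) : Prop :=
  [/\ smooth_curve beta,
      regular_curve beta,
      infinite_length beta,
      (* beta lies in the totally geodesic plane M^2 through sigma *)
      (forall t, 0 <= t -> dotv (fun k => beta t k - p k) e2 = 0) &
      (forall t, 0 <= t -> forall s : R, beta t <> (fun k => p k + s * e3 k))].

Definition immersionE (p e1 e2 e3 : 'I_3 -> R) (beta : R -> 'I_3 -> R)
  : R -> R -> 'I_3 -> R := fun t th => rotE p e1 e2 e3 th (beta t).

(** ---------- Round unit sphere S^3 in R^4 ----------
   sigma = { cos s e3 + sin s e4 } (a great circle), M^2 = S^3 ∩ e2^⊥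
   (the totally geodesic 2-sphere containing sigma), R_theta the rotation
   of angle theta in the plane (e1, e2), fixing sigma pointwise. *)
Definition rotS (e1 e2 e3 e4 : 'I_4 -> R) (th : R) (q : 'I_4 -> R) : 'I_4 -> R :=
  let c1 := dotv q e1 in let c2 := dotv q e2 in
  let c3 := dotv q e3 in let c4 := dotv q e4 in
  fun k => (c1 * cos th - c2 * sin th) * e1 k
           + (c1 * sin th + c2 * cos th) * e2 k + c3 * e3 k + c4 * e4 k.

Definition sphere_end_data (e1 e2 e3 e4 : 'I_4 -> R) (beta : R -> 'I_4 -> R) : Prop :=
  [/\ smooth_curve beta,
      regular_curve beta,
      infinite_length beta,
      (forall t, 0 <= t -> dotv (beta t) (beta t) = 1 /\ dotv (beta t) e2 = 0) &
      (forall t, 0 <= t -> forall s : R,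
          beta t <> (fun k => cos s * e3 k + sin s * e4 k))].

Definition immersionS (e1 e2 e3 e4 : 'I_4 -> R) (beta : R -> 'I_4 -> R)
  : R -> R -> 'I_4 -> R := fun t th => rotS e1 e2 e3 e4 th (beta t).

(** ---------- Harmonic functions on a parametrized end ----------
   The end is [0,oo) x S^1 (coordinates (t, theta), theta mod 2pi) with the
   metric induced by the immersion X : (t, theta) |-> X t theta in R^N. *)
Definition pd1 (f : R -> R -> R) (t th : R) : R := derive1 (fun s => f s th) t.
Definition pd2 (f : R -> R -> R) (t th : R) : R := derive1 (fun s => f t s) th.

Definition g11 N (X : R -> R -> 'I_N -> R) t th :=
  dotv (fun i => pd1 (fun a b => X a b i) t th) (fun i => pd1 (fun a b => X a b i) t th).
Definition g12 N (X : R -> R -> 'I_N -> R) t th :=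
  dotv (fun i => pd1 (fun a b => X a b i) t th) (fun i => pd2 (fun a b => X a b i) t th).
Definition g22 N (X : R -> R -> 'I_N -> R) t th :=
  dotv (fun i => pd2 (fun a b => X a b i) t th) (fun i => pd2 (fun a b => X a b i) t th).
Definition volg N (X : R -> R -> 'I_N -> R) t th :=
  Num.sqrt (g11 X t th * g22 X t th - g12 X t th ^+ 2).

Definition interior : set (R * R) := [set q | 0 < q.1].
Definition closed_end : set (R * R) := [set q | 0 <= q.1].

Definition jcont (f : R -> R -> R) (A : set (R * R)) : Prop :=
  {within A, continuous (fun q : R * R => f q.1 q.2)}.

Definition C2_interior (u : R -> R -> R) : Prop :=
  [/\ (forall t th, 0 < t ->
        [/\ derivable (fun s => u s th) t 1, derivable (fun s => u t s) th 1,
            derivable (fun s => pd1 u s th) t 1, derivable (fun s => pd1 u t s) th 1 &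
            derivable (fun s => pd2 u s th) t 1 /\ derivable (fun s => pd2 u t s) th 1]),
      jcont (pd1 u) interior, jcont (pd2 u) interior,
      jcont (pd1 (pd1 u)) interior &
      [/\ jcont (pd2 (pd1 u)) interior, jcont (pd1 (pd2 u)) interior &
           jcont (pd2 (pd2 u)) interior]].

(** Laplace-Beltrami operator of the induced metric, in divergence form:
    Delta u = (1/sqrt g) d_i (sqrt g g^{ij} d_j u). *)
Definition laplace_beltrami N (X : R -> R -> 'I_N -> R) (u : R -> R -> R) (t th : R) : R :=
  (pd1 (fun a b => (g22 X a b * pd1 u a b - g12 X a b * pd2 u a b) / volg X a b) t th
   + pd2 (fun a b => (g11 X a b * pd2 u a b - g12 X a b * pd1 u a b) / volg X a b) t th)
  / volg X t th.

Definition harmonic_on_end N (X : R -> R -> 'I_N -> R) (u : R -> R -> R) : Prop :=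
  [/\ (forall t th, 0 <= t -> u t (th + 2 * pi) = u t th),
      jcont u closed_end,
      C2_interior u &
      (forall t th, 0 < t -> laplace_beltrami X u t th = 0)].

Definition bounded_on_end (u : R -> R -> R) : Prop :=
  exists M : R, forall t th, 0 <= t -> `|u t th| <= M.

Definition parabolic_end N (X : R -> R -> 'I_N -> R) : Prop :=
  forall u v : R -> R -> R,
    bounded_on_end u -> bounded_on_end v ->
    harmonic_on_end X u -> harmonic_on_end X v ->
    (forall th, u 0 th = v 0 th) ->
    forall t th, 0 <= t -> u t th = v t th.

End Defs.

From Pilot Require Import Defs.
From HB Require Import structures.
From mathcomp Require Import all_boot all_order all_algebra.
From mathcomp Require Import all_classical all_reals all_analysis.
From mathcomp Require Import ring lra.
Set Implicit Arguments. Unset Strict Implicit. Unset Printing Implicit Defensive.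
Import Order.TTheory GRing.Theory Num.Theory.
Import numFieldNormedType.Exports.
Local Open Scope classical_set_scope.
Local Open Scope ring_scope.

(** In the coordinates [(t, θ)] the induced metric is [S dt^2 + c^2 dθ^2], where
    [S = |β'|^2] and [c] is the component of [β] along [e1] (the distance to the
    axis in [R^3], its sine in [S^3]).  With [m = sqrt S / |c|] and [k = 1 / m] the
    Laplacian is a positive multiple of [(k u_t)_t + m u_θθ], so [φ t = ∫_0^t m]
    is harmonic and [φ^2] strictly subharmonic.  As [e1] is a unit vector,
    [|c'| <= sqrt S = m |c|], hence [|c| <= |c 0| e^φ] and
    [sqrt S <= (|c 0| e^φ)']; infinite length thus forces [φ] to be unbounded.
    For bounded harmonic [u], [v] with equal boundary values, the function
    [u - v - ε φ + η φ^2] has no interior maximum on [[0, T] × S^1] and is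
    negative at [t = T] once [T] is large, so [u - v <= ε φ]; let [ε -> 0]. *)

Section Derive1.
Variable R : realType.
Implicit Types (f g : R -> R) (a x : R).

Lemma derive1D f g x : derivable f x 1 -> derivable g x 1 ->
  derivable (fun y => f y + g y) x 1 /\
  derive1 (fun y => f y + g y) x = derive1 f x + derive1 g x.
Proof.
move=> df dg; split; first exact: derivableD.
by rewrite !derive1E (deriveD df dg).
Qed.

Lemma derive1B f g x : derivable f x 1 -> derivable g x 1 ->
  derivable (fun y => f y - g y) x 1 /\
  derive1 (fun y => f y - g y) x = derive1 f x - derive1 g x.
Proof.
move=> df dg; split; first exact: derivableB.
by rewrite !derive1E (deriveB df dg).
Qed.

Lemma derive1M f g x : derivable f x 1 -> derivable g x 1 ->
  derivable (fun y => f y * g y) x 1 /\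
  derive1 (fun y => f y * g y) x = derive1 f x * g x + f x * derive1 g x.
Proof.
move=> df dg; split; first exact: derivableM.
by rewrite !derive1E (deriveM df dg) addrC [_ *: _]mulrC.
Qed.

Lemma derive1Zl f a x : derivable f x 1 ->
  derivable (fun y => a * f y) x 1 /\ derive1 (fun y => a * f y) x = a * derive1 f x.
Proof.
move=> df; split; first exact: derivableZ.
exact: derive1Ml.
Qed.

Lemma derive1_expR f x : derivable f x 1 ->
  derivable (fun y => expR (f y)) x 1 /\
  derive1 (fun y => expR (f y)) x = expR (f x) * derive1 f x.
Proof.
move=> df; have dexp := @derivable_expR R (f x).
split.
  apply/derivable1_diffP; apply: differentiable_comp; exact/derivable1_diffP.
rewrite -[fun y => _]/(expR \o f) derive1_comp //; congr (_ * _).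
by rewrite derive1E; exact: derive_val.
Qed.

Lemma derivable_sqrt f x : derivable f x 1 -> 0 < f x ->
  derivable (fun y => Num.sqrt (f y)) x 1.
Proof.
move=> df fx_gt0; apply/derivable1_diffP/differentiable_comp; first exact/derivable1_diffP.
exact/derivable1_diffP/(@ex_derive _ _ _ _ _ _ _ (is_derive1_sqrt fx_gt0)).
Qed.

Lemma derivable_div f g x : derivable f x 1 -> derivable g x 1 -> g x != 0 ->
  derivable (fun y => f y / g y) x 1.
Proof. by move=> df dg gx0; exact: (derive1M df (derivableV gx0 dg)).1. Qed.

Lemma derive1_near_cst f a x : (\forall y \near x, f y = a) -> derive1 f x = 0.
Proof. by move=> fa; rewrite derive1E (near_eq_derive _ fa) derive_cst. Qed.

Lemma derive1_cos_sin (a b c x : R) :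
  derive1 (fun y => a + cos y * b + sin y * c) x = - sin x * b + cos x * c.
Proof.
have dcos := @derivable_cos R x; have dsin := @derivable_sin R x.
have [dA eA] := derive1D (derivable_cst a x 1) (derivableM dcos (derivable_cst b x 1)).
rewrite (derive1D dA (derivableM dsin (derivable_cst c x 1))).2 eA.
rewrite derive1_cst !derive1Mr // !derive1E.
rewrite (@derive_val _ _ _ _ _ _ _ (is_derive_cos x)).
by rewrite (@derive_val _ _ _ _ _ _ _ (is_derive_sin x)); ring.
Qed.

Lemma derive1_local_max f (c d : R) : 0 < d ->
  (forall y, `|y - c| < d -> f y <= f c) ->
  (forall y, `|y - c| < d -> derivable f y 1) ->
  derivable (derive1 f) c 1 ->
  derive1 f c = 0 /\ derive1 (derive1 f) c <= 0.
Proof.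
move=> d_gt0 fmax fder f'der.
have inI y : y \in `](c - d), (c + d)[%R -> `|y - c| < d.
  by rewrite in_itv /= => /andP[? ?]; rewrite ltr_norml; apply/andP; split; lra.
have f'c : derive1 f c = 0.
  have cI : c \in `](c - d), (c + d)[%R by rewrite in_itv /=; apply/andP; split; lra.
  have := derive1_at_max (ltW (_ : c - d < c + d)) (fun t ht => fder t (inI t ht)) cI
    (fun t ht => fmax t (inI t ht)).
  by rewrite derive1E => /(_ ltac:(lra)) H; rewrite (@derive_val _ _ _ _ _ _ _ H).
split => //; rewrite leNgt; apply/negP => f''c.
set g := derive1 f in f'der f''c f'c.
have dq : (fun h : R => h^-1 *: (g (h *: 1 + c) - g c)) @ 0^' --> 'D_1 g c := f'der.
rewrite derive1E in f''c.
have [e /= e_gt0 He] := @cvgr_gt _ _ _ _ _ _ dq _ f''c.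
pose h := Num.min e d / 2.
have [mle mld] : Num.min e d <= e /\ Num.min e d <= d by apply/andP; rewrite -le_min.
have h_gt0 : 0 < h by rewrite /h divr_gt0 // lt_min e_gt0 d_gt0.
have [he hd] : h < e /\ h < d by rewrite /h; split; lra.
(* [f' > 0] on [(c, c + h]], so [f] increases strictly there *)
have g_gt0 y : 0 < y -> y <= h -> 0 < g (y + c).
  move=> y_gt0 yh.
  have := He y; rewrite /ball /= sub0r normrN gtr0_norm // => /(_ ltac:(lra)).
  move=> /(_ (lt0r_neq0 y_gt0)); rewrite f'c subr0 /GRing.scale /= mulr1.
  by rewrite pmulr_rgt0 // invr_gt0.
have [||xi] := @MVT R f g c (c + h) ltac:(lra).
- move=> x; rewrite in_itv /= => /andP[x1 x2].
  rewrite /g derive1E; apply: derivableP; apply: fder.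
  by rewrite ltr_norml; apply/andP; split; lra.
- apply: derivable_within_continuous => x; rewrite in_itv /= => /andP[x1 x2].
  by apply: fder; rewrite ltr_norml; apply/andP; split; lra.
rewrite in_itv /= => /andP[x1 x2] Hmvt.
have := g_gt0 (xi - c) ltac:(lra) ltac:(lra); rewrite subrK => gxi.
have : f (c + h) <= f c by apply: fmax; rewrite addrAC subrr add0r gtr0_norm.
have : 0 < g xi * (c + h - c) by apply: mulr_gt0; lra.
lra.
Qed.

Lemma derive1_local_max_sub f g (c d : R) : 0 < d ->
  (forall y, `|y - c| < d -> derivable f y 1) -> (forall y, `|y - c| < d -> derivable g y 1) ->
  derivable (derive1 f) c 1 -> derivable (derive1 g) c 1 ->
  (forall y, `|y - c| < d -> f y - g y <= f c - g c) ->
  derive1 f c = derive1 g c /\ derive1 (derive1 f) c <= derive1 (derive1 g) c.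
Proof.
move=> d_gt0 df dg df' dg' fgmax.
have c_in : `|c - c| < d by rewrite subrr normr0.
have c_ball : \forall y \near c, `|y - c| < d.
  by exists d => //= y; rewrite /ball /= distrC.
have h'E : \forall y \near c, derive1 f y - derive1 g y = derive1 (fun y => f y - g y) y.
  by near=> y; apply/esym/(derive1B (df y _) (dg y _)).2; near: y.
have := derive1_local_max d_gt0 fgmax (fun y yI => (derive1B (df y yI) (dg y yI)).1)
  (near_eq_derivable h'E (derive1B df' dg').1).
rewrite !derive1E -(near_eq_derive _ h'E) -!derive1E (derive1B df' dg').2.
rewrite (derive1B (df c c_in) (dg c c_in)).2 subr_le0 => -[/eqP].
by rewrite subr_eq0 => /eqP.
Unshelve. all: by end_near.
Qed.
End Derive1.

Section Dotv.
Variable R : realType.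

Lemma dotvC N (u v : 'I_N -> R) : dotv u v = dotv v u.
Proof. by apply: eq_bigr => i _; rewrite mulrC. Qed.

Lemma dotv0r N (u : 'I_N -> R) : dotv u (fun _ => 0) = 0.
Proof. by rewrite /dotv big1 // => i _; rewrite mulr0. Qed.

Lemma dotv_gt0 N (v : 'I_N -> R) : v <> (fun _ => 0) -> 0 < dotv v v.
Proof.
move=> v_neq0; have sqr_ge0 i : 0 <= v i * v i by rewrite -expr2 sqr_ge0.
rewrite lt_def sumr_ge0 ?andbT => [|i _]; last exact: sqr_ge0.
apply: contra_notN v_neq0; rewrite psumr_eq0 => [/allP v0|i _]; last exact: sqr_ge0.
by apply/funext => i; apply/eqP; rewrite -sqrf_eq0 expr2; exact: v0 (mem_index_enum i).
Qed.

Lemma dotv_plane N (e1 e2 v v' : 'I_N -> R) (a b a' b' : R) :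
  dotv e1 e1 = 1 -> dotv e2 e2 = 1 -> dotv e1 e2 = 0 ->
  dotv (fun k => v k + a * e1 k + b * e2 k) (fun k => v' k + a' * e1 k + b' * e2 k) =
  dotv v v' + a * dotv e1 v' + b * dotv e2 v' + a' * dotv v e1 + b' * dotv v e2
  + a * a' + b * b'.
Proof.
move=> e11 e22 e12; rewrite -[RHS]addr0 -(mulr0 (a * b' + b * a')) -{1}e12.
rewrite -[a * a']mulr1 -{1}e11 -[b * b']mulr1 -{1}e22 /dotv.
rewrite !mulr_sumr -!big_split /=; apply: eq_bigr => k _; ring.
Qed.

Lemma dotv_unit_sqr_le N (v e : 'I_N -> R) : dotv e e = 1 -> dotv v e ^+ 2 <= dotv v v.
Proof.
move=> e1.
have sum_sqr c : \sum_(k < N) (v k - c * e k) ^+ 2 =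
    dotv v v - 2 * c * dotv v e + c ^+ 2 * dotv e e.
  rewrite /dotv !mulr_sumr -sumrB -big_split /=; apply: eq_bigr => k _; ring.
have : 0 <= \sum_(k < N) (v k - dotv v e * e k) ^+ 2.
  by apply: sumr_ge0 => k _; exact: sqr_ge0.
rewrite sum_sqr e1; lra.
Qed.

Lemma basis_expand n (f : 'I_n -> 'I_n -> R) :
  (forall i j, dotv (f i) (f j) = (i == j)%:R) ->
  forall (v : 'I_n -> R) k, v k = \sum_(i < n) dotv v (f i) * f i k.
Proof.
move=> ortho v k.
pose M : 'M[R]_n := \matrix_(i, j) f i j.
have MMt : M *m M^T = 1%:M.
  apply/matrixP => i j; rewrite !mxE -ortho /dotv.
  by apply: eq_bigr => l _; rewrite !mxE.
(* a left inverse of a square matrix is also a right inverse *)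
have cols_ortho l : \sum_(i < n) f i l * f i k = (l == k)%:R.
  have := congr1 (fun A : 'M[R]_n => A l k) (mulmx1C MMt); rewrite !mxE => <-.
  by apply: eq_bigr => i _; rewrite !mxE.
transitivity (\sum_(l < n) v l * (l == k)%:R).
  rewrite (bigD1 k) //= eqxx mulr1 big1 ?addr0 // => l /negbTE ->.
  by rewrite mulr0.
symmetry; rewrite /dotv; under eq_bigr do rewrite mulr_suml.
rewrite exchange_big /=; apply: eq_bigr => l _.
by rewrite -cols_ortho mulr_sumr; apply: eq_bigr => i _; rewrite mulrA.
Qed.

Lemma parseval n (f : 'I_n -> 'I_n -> R) :
  (forall i j, dotv (f i) (f j) = (i == j)%:R) ->
  forall (v : 'I_n -> R), dotv v v = \sum_(i < n) dotv v (f i) ^+ 2.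
Proof.
move=> ortho v; rewrite {1}/dotv.
under eq_bigr => k _ do rewrite {2}(basis_expand ortho v k) mulr_sumr.
rewrite exchange_big /=; apply: eq_bigr => i _.
rewrite expr2 /dotv mulr_suml; apply: eq_bigr => k _.
by rewrite [_ * f i k]mulrC mulrA.
Qed.

Definition frame3 (e1 e2 e3 : 'I_3 -> R) (i : 'I_3) : 'I_3 -> R :=
  match nat_of_ord i with 0 => e1 | 1 => e2 | _ => e3 end.

Definition frame4 (e1 e2 e3 e4 : 'I_4 -> R) (i : 'I_4) : 'I_4 -> R :=
  match nat_of_ord i with 0 => e1 | 1 => e2 | 2 => e3 | _ => e4 end.

Lemma frame3_orthonormal e1 e2 e3 : orthonormal3 e1 e2 e3 ->
  forall i j, dotv (frame3 e1 e2 e3 i) (frame3 e1 e2 e3 j) = (i == j)%:R.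
Proof.
move=> [h11 h22 h33 [h12 h13 h23]].
by case=> [[|[|[|i]]] Hi] //; case=> [[|[|[|j]]] Hj] //=;
  rewrite ?h11 ?h22 ?h33 ?h12 ?h13 ?h23 // dotvC ?h12 ?h13 ?h23.
Qed.

Lemma frame4_orthonormal e1 e2 e3 e4 : orthonormal4 e1 e2 e3 e4 ->
  forall i j, dotv (frame4 e1 e2 e3 e4 i) (frame4 e1 e2 e3 e4 j) = (i == j)%:R.
Proof.
move=> [h11 h22 h33 h44 [h12 h13 h14 h23 [h24 h34]]].
by case=> [[|[|[|[|i]]]] Hi] //; case=> [[|[|[|[|j]]]] Hj] //=;
  rewrite ?h11 ?h22 ?h33 ?h44 ?h12 ?h13 ?h14 ?h23 ?h24 ?h34 //
    dotvC ?h12 ?h13 ?h14 ?h23 ?h24 ?h34.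
Qed.

Lemma orthonormal3_expand e1 e2 e3 (v : 'I_3 -> R) k : orthonormal3 e1 e2 e3 ->
  v k = dotv v e1 * e1 k + dotv v e2 * e2 k + dotv v e3 * e3 k.
Proof.
move=> /frame3_orthonormal /basis_expand ->.
by rewrite !big_ord_recr big_ord0 /frame3 /= add0r.
Qed.

Lemma orthonormal4_expand e1 e2 e3 e4 (v : 'I_4 -> R) k : orthonormal4 e1 e2 e3 e4 ->
  v k = dotv v e1 * e1 k + dotv v e2 * e2 k + dotv v e3 * e3 k + dotv v e4 * e4 k.
Proof.
move=> /frame4_orthonormal /basis_expand ->.
by rewrite !big_ord_recr big_ord0 /frame4 /= add0r.
Qed.

Lemma orthonormal4_dotvv e1 e2 e3 e4 (v : 'I_4 -> R) : orthonormal4 e1 e2 e3 e4 ->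
  dotv v v = dotv v e1 ^+ 2 + dotv v e2 ^+ 2 + dotv v e3 ^+ 2 + dotv v e4 ^+ 2.
Proof.
move=> /frame4_orthonormal /parseval ->.
by rewrite !big_ord_recr big_ord0 /frame4 /= add0r.
Qed.
End Dotv.

Section PeriodicMaximum.
Variable R : realType.

(** Over a window of length [4 pi] the maximum of a periodic function can be
    moved, by a period, into the open window. *)
Lemma periodic_max_interior (f : R -> R -> R) (T th1 : R) : 0 <= T ->
  jcont f (@closed_end R) ->
  (forall t b, 0 <= t -> f t (b + 2 * pi) = f t b) ->
  exists t0 b0, [/\ 0 <= t0 <= T, th1 - 2 * pi < b0 < th1 + 2 * pi &
    forall t b, 0 <= t <= T -> th1 - 2 * pi <= b <= th1 + 2 * pi -> f t b <= f t0 b0].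
Proof.
move=> T_ge0 fcont fper; have pi_gt0 := @pi_gt0 R.
pose K := `[0, T] `*` `[th1 - 2 * pi, th1 + 2 * pi].
have Kcompact : compact K by apply: compact_setX; exact: segment_compact.
have inK t b : 0 <= t <= T -> th1 - 2 * pi <= b <= th1 + 2 * pi -> K (t, b).
  by move=> tI bI; split; rewrite /= in_itv.
have Ksub : K `<=` @closed_end R.
  by move=> [t b] [/= + _]; rewrite in_itv /= => /andP[].
have [|[t0 b1] /set_mem [/=] + + fmax] :=
    compact_EVT_max _ Kcompact (continuous_subspaceW Ksub fcont).
  by exists (0, th1); apply: inK; apply/andP; split; lra.
rewrite !in_itv /= => t0I /andP[b1_ge b1_le].
have fmax' t b : 0 <= t <= T -> th1 - 2 * pi <= b <= th1 + 2 * pi ->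
    f t b <= f t0 b1.
  by move=> tI bI; apply: (fmax (t, b)); rewrite inE; apply: inK.
have [t0_ge0 _] := andP t0I.
have [b1I|b1_bnd] := boolP ((th1 - 2 * pi < b1) && (b1 < th1 + 2 * pi)).
  by exists t0, b1.
exists t0, th1; split => //; first by apply/andP; split; lra.
have [b1E|b1E] : b1 = th1 + 2 * pi \/ b1 = th1 - 2 * pi.
  by move: b1_bnd; rewrite negb_and -!leNgt => /orP[]; [right|left]; lra.
- by move=> t b tI bI; rewrite -(fper t0 th1 t0_ge0) -b1E; exact: fmax'.
- move=> t b tI bI; rewrite -[th1](subrK (2 * pi)) fper // -b1E; exact: fmax'.
Qed.
End PeriodicMaximum.

Definition warped_op (R : realType) (k m : R -> R) (u : R -> R -> R) (t th : R) : R :=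
  derive1 k t * pd1 u t th + k t * pd1 (pd1 u) t th + m t * pd2 (pd2 u) t th.

Definition warped_harmonic (R : realType) (k m : R -> R) (u : R -> R -> R) : Prop :=
  [/\ (forall t th, 0 <= t -> u t (th + 2 * pi) = u t th),
      jcont u (@closed_end R),
      C2_interior u,
      bounded_on_end u &
      (forall t th, 0 < t -> warped_op k m u t th = 0)].

Lemma touching_barrier_absurd (R : realType)
    (k k' m m' A eta ut vt utt vtt uθθ vθθ : R) :
  0 < k -> 0 < m -> 0 < eta -> k' * m + k * m' = 0 ->
  ut = vt + A * m -> utt <= vtt + (A * m' - 2 * eta * m * m) -> uθθ <= vθθ ->
  k' * ut + k * utt + m * uθθ = 0 -> k' * vt + k * vtt + m * vθθ = 0 -> False.
Proof.
move=> k_gt0 m_gt0 eta_gt0 km'0 -> Dtt Dθθ Lu Lv.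
have : k * (utt - vtt - (A * m' - 2 * eta * m * m)) <= 0 by rewrite pmulr_rle0 //; lra.
have : m * (uθθ - vθθ) <= 0 by rewrite pmulr_rle0 //; lra.
have : 0 < eta * (k * (m * m)) by rewrite !mulr_gt0.
(* the first-order terms cancel because [(k m)' = 0] *)
have : A * (k' * m + k * m') = 0 by rewrite km'0 mulr0.
nra.
Qed.

Section WarpedComparison.
Variable R : realType.
Variables k m phi : R -> R.
Hypothesis k_gt0 : forall t, 0 < t -> 0 < k t.
Hypothesis m_gt0 : forall t, 0 < t -> 0 < m t.
Hypothesis k_derivable : forall t, 0 < t -> derivable k t 1.
Hypothesis m_derivable : forall t, 0 < t -> derivable m t 1.
Hypothesis km1 : forall t, 0 < t -> k t * m t = 1.
Hypothesis phi_derivable : forall t, 0 <= t -> derivable phi t 1.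
Hypothesis phi'E : forall t, 0 < t -> derive1 phi t = m t.

Lemma km_derive t : 0 < t -> derive1 k t * m t + k t * derive1 m t = 0.
Proof.
move=> t_gt0; rewrite -(derive1M (k_derivable t_gt0) (m_derivable t_gt0)).2.
apply: (derive1_near_cst (a := 1)); near=> s; apply: km1.
by near: s; exact: lt_nbhsr.
Unshelve. all: by end_near.
Qed.

(** A strict supersolution: [(k phi')' = (k m)' = 0] while [(k (phi^2)')' = 2 m > 0]. *)
Definition barrier (eps eta t : R) : R := eps * phi t - eta * (phi t * phi t).

Lemma barrier_derivable eps eta t : 0 <= t -> derivable (barrier eps eta) t 1.
Proof.
move=> t_ge0; have dphi := phi_derivable t_ge0.
exact: (derive1B (derive1Zl eps dphi).1 (derive1Zl eta (derive1M dphi dphi).1).1).1.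
Qed.

Lemma barrier'E eps eta t : 0 < t ->
  derive1 (barrier eps eta) t = (eps - 2 * eta * phi t) * m t.
Proof.
move=> t_gt0; have dphi := phi_derivable (ltW t_gt0).
have [dphi2 e2] := derive1M dphi dphi.
rewrite (derive1B (derive1Zl eps dphi).1 (derive1Zl eta dphi2).1).2.
by rewrite (derive1Zl _ dphi).2 (derive1Zl _ dphi2).2 e2 phi'E //; ring.
Qed.

Lemma barrier''E eps eta t : 0 < t ->
  derivable (derive1 (barrier eps eta)) t 1 /\
  derive1 (derive1 (barrier eps eta)) t =
    (eps - 2 * eta * phi t) * derive1 m t - 2 * eta * m t * m t.
Proof.
move=> t_gt0; have dphi := phi_derivable (ltW t_gt0).
have B'E : \forall s \near t, (eps - 2 * eta * phi s) * m s = derive1 (barrier eps eta) s.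
  by near=> s; rewrite barrier'E //; near: s; exact: lt_nbhsr.
have [dA A'E] := derive1B (derivable_cst eps t 1) (derive1Zl (2 * eta) dphi).1.
have [dAm Am'E] := derive1M dA (m_derivable t_gt0).
split; first exact: near_eq_derivable B'E dAm.
rewrite derive1E -(near_eq_derive _ B'E) -derive1E Am'E A'E derive1_cst.
by rewrite (derive1Zl _ dphi).2 phi'E // /cst; ring.
Unshelve. all: by end_near.
Qed.

Lemma barrier_no_interior_max (u v : R -> R -> R) (eps eta t0 b0 d : R) :
  0 < eta -> 0 < d -> d <= t0 -> C2_interior u -> C2_interior v ->
  warped_op k m u t0 b0 = 0 -> warped_op k m v t0 b0 = 0 ->
  (forall t b, `|t - t0| < d -> `|b - b0| < d ->
     u t b - v t b - barrier eps eta t <= u t0 b0 - v t0 b0 - barrier eps eta t0) ->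
  False.
Proof.
move=> eta_gt0 d_gt0 d_le.
have t0_gt0 : 0 < t0 by apply: lt_le_trans d_le.
have near_gt0 t : `|t - t0| < d -> 0 < t by rewrite ltr_norml => /andP[? _]; lra.
have d0 (x : R) : `|x - x| < d by rewrite subrr normr0.
move=> [uder _ _ _ _] [vder _ _ _ _] Lu Lv wmax.
have [_ _ du11 _ [_ du22]] := uder t0 b0 t0_gt0.
have [_ _ dv11 _ [_ dv22]] := vder t0 b0 t0_gt0.
have [_ uvθθ] : pd2 u t0 b0 = pd2 v t0 b0 /\ pd2 (pd2 u) t0 b0 <= pd2 (pd2 v) t0 b0.
  apply: (derive1_local_max_sub d_gt0 _ _ du22 dv22) => [b _|b _|b bI].
  - by have [] := uder t0 b t0_gt0.
  - by have [] := vder t0 b t0_gt0.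
  - by have := wmax _ _ (d0 t0) bI; rewrite lerD2r.
pose g s := v s b0 + barrier eps eta s.
have dg s : 0 < s -> derivable g s 1 /\ derive1 g s = pd1 v s b0 + derive1 (barrier eps eta) s.
  move=> s_gt0; have [dv _ _ _ _] := vder s b0 s_gt0.
  exact: derive1D dv (@barrier_derivable eps eta s (ltW s_gt0)).
have g'E : \forall s \near t0, pd1 v s b0 + derive1 (barrier eps eta) s = derive1 g s.
  near=> s; have s_gt0 : 0 < s by near: s; exact: lt_nbhsr.
  exact/esym/(dg s s_gt0).2.
have [dB' B''E] := barrier''E eps eta t0_gt0.
have [dvB' vB''E] := derive1D dv11 dB'.
have du s : `|s - t0| < d -> derivable (fun s => u s b0) s 1.
  by move=> /near_gt0 /(uder s b0) [].
have ugmax s : `|s - t0| < d -> u s b0 - g s <= u t0 b0 - g t0.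
  by move=> sI; rewrite /g !(opprD (v _ b0)) !addrA; exact: wmax.
have [ut utt] := derive1_local_max_sub d_gt0 du
  (fun s sI => (dg s (near_gt0 s sI)).1) du11 (near_eq_derivable g'E dvB')
  ugmax.
rewrite (dg t0 t0_gt0).2 barrier'E // in ut.
rewrite !derive1E -(near_eq_derive _ g'E) -!derive1E vB''E B''E in utt.
rewrite /warped_op in Lu Lv.
exact: (touching_barrier_absurd (k_gt0 t0_gt0) (m_gt0 t0_gt0) eta_gt0 (km_derive t0_gt0)
  ut utt uvθθ Lu Lv).
Unshelve. all: by end_near.
Qed.

Hypothesis phi0 : phi 0 = 0.
Hypothesis phi_nondecr : forall t s, 0 <= t -> t <= s -> phi t <= phi s.
Hypothesis phi_unbounded : forall B, exists T, 0 <= T /\ B <= phi T.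

Lemma barrier_max_le0 (u v : R -> R -> R) (eps eta T th1 t0 b0 : R) :
  0 < eta -> C2_interior u -> C2_interior v ->
  (forall t th, 0 < t -> warped_op k m u t th = 0) ->
  (forall t th, 0 < t -> warped_op k m v t th = 0) ->
  (forall th, u 0 th = v 0 th) ->
  (forall th, u T th - v T th - barrier eps eta T <= 0) ->
  0 <= t0 <= T -> th1 - 2 * pi < b0 < th1 + 2 * pi ->
  (forall t b, 0 <= t <= T -> th1 - 2 * pi <= b <= th1 + 2 * pi ->
     u t b - v t b - barrier eps eta t <= u t0 b0 - v t0 b0 - barrier eps eta t0) ->
  u t0 b0 - v t0 b0 - barrier eps eta t0 <= 0.
Proof.
move=> eta_gt0 uC2 vC2 uL vL uv0 uvT /andP[t0_ge0 t0_le] /andP[b0_gt b0_lt] wmax.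
have [->|t0_neq0] := eqVneq t0 0; first by rewrite /barrier uv0 phi0 subrr !mulr0 subr0.
have [->|t0_neqT] := eqVneq t0 T; first exact: uvT.
have t0_gt0 : 0 < t0 by rewrite lt_neqAle eq_sym t0_neq0.
have t0_lt : t0 < T by rewrite lt_neqAle t0_neqT.
pose d := Num.min (Num.min t0 (T - t0)) (Num.min (b0 - (th1 - 2 * pi)) (th1 + 2 * pi - b0)).
have [d_t0 d_T d_lo d_hi] :
    [/\ d <= t0, d <= T - t0, d <= b0 - (th1 - 2 * pi) & d <= th1 + 2 * pi - b0].
  by rewrite /d !ge_min !lexx !orbT.
have d_gt0 : 0 < d by rewrite /d !lt_min !subr_gt0 t0_gt0 t0_lt b0_gt b0_lt.
exfalso; apply: (barrier_no_interior_max eta_gt0 d_gt0 d_t0 uC2 vC2 (uL _ _ t0_gt0)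
  (vL _ _ t0_gt0)).
move=> t b; rewrite !ltr_norml => /andP[? ?] /andP[? ?].
by apply: wmax; apply/andP; split; lra.
Qed.

Lemma warped_comparison_eps (u v : R -> R -> R) :
  warped_harmonic k m u -> warped_harmonic k m v -> (forall th, u 0 th = v 0 th) ->
  forall eps t th, 0 < eps -> 0 <= t -> u t th - v t th <= eps * phi t.
Proof.
move=> [uper ucont uC2 [Mu uMu] uL] [vper vcont vC2 [Mv vMv] vL] uv0 eps t1 th1 eps_gt0 t1_ge0.
have phi_ge0 t : 0 <= t -> 0 <= phi t by move=> t_ge0; rewrite -phi0; exact: phi_nondecr.
have pi_gt0 := @pi_gt0 R.
(* [u - v - barrier] is negative at [t = T] since [Mu + Mv < eps phi T] and
   [eta phi(T)^2 <= 1/2] *)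
have [T0 [T0_ge0 T0_big]] := phi_unbounded ((Mu + Mv + 1) / eps).
pose T := Num.max T0 t1 + 1; pose P := phi T.
have [T0T t1T] : T0 < T /\ t1 < T.
  by have := le_refl (Num.max T0 t1); rewrite ge_max => /andP[? ?]; rewrite /T; split; lra.
have epsP : Mu + Mv + 1 <= eps * P.
  rewrite mulrC -ler_pdivrMr //; apply: le_trans T0_big _; apply: phi_nondecr; lra.
pose eta := (2 * P ^+ 2 + 2)^-1.
have eta_gt0 : 0 < eta by rewrite /eta invr_gt0; have := sqr_ge0 P; lra.
have etaP : eta * (P * P) <= 1 / 2.
  rewrite /eta mulrC ler_pdivrMr; last by have := sqr_ge0 P; lra.
  by have := sqr_ge0 P; rewrite expr2; lra.
have uvT th : u T th - v T th - barrier eps eta T <= 0.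
  have T_ge0 : 0 <= T by lra.
  have := uMu T th T_ge0; have := vMv T th T_ge0.
  by rewrite /barrier -/P !ler_norml => /andP[? ?] /andP[? ?]; lra.
pose w t b := u t b - v t b - barrier eps eta t.
have wcont : jcont w (@closed_end R).
  have bcont : jcont (fun t _ => barrier eps eta t) (@closed_end R).
    apply: continuous_in_subspaceT => -[t b] /set_mem /= t_ge0.
    apply: continuous_comp; first exact: cvg_fst.
    by apply/differentiable_continuous/derivable1_diffP; exact: barrier_derivable.
  move=> q; exact: continuousB (continuousB (ucont q) (vcont q)) (bcont q).
have wper t b : 0 <= t -> w t (b + 2 * pi) = w t b by move=> t_ge0; rewrite /w uper ?vper.
have [t0 [b0 [t0I b0I wmax]]] :=
  periodic_max_interior th1 (ltW (le_lt_trans T0_ge0 T0T)) wcont wper.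
have t1I : 0 <= t1 <= T by apply/andP; split; lra.
have th1I : th1 - 2 * pi <= th1 <= th1 + 2 * pi by apply/andP; split; lra.
have := le_trans (wmax t1 th1 t1I th1I) (barrier_max_le0 eta_gt0 uC2 vC2 uL vL uv0 uvT
  t0I b0I wmax).
have : 0 <= eta * (phi t1 * phi t1) by rewrite mulr_ge0 ?mulr_ge0 ?phi_ge0 // ltW.
by rewrite /w /barrier; lra.
Qed.

Lemma warped_comparison (u v : R -> R -> R) :
  warped_harmonic k m u -> warped_harmonic k m v -> (forall th, u 0 th = v 0 th) ->
  forall t th, 0 <= t -> u t th <= v t th.
Proof.
move=> hu hv uv0 t th t_ge0; rewrite -subr_le0.
have phit_ge0 : 0 <= phi t by rewrite -phi0; exact: phi_nondecr.
apply/ler_addgt0Pr => z z_gt0; rewrite add0r.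
have eps_gt0 : 0 < z / (phi t + 1) by rewrite divr_gt0 //; lra.
apply: le_trans (warped_comparison_eps hu hv uv0 th eps_gt0 t_ge0) _.
by rewrite mulrAC ler_pdivrMr ?ler_pM2l //; lra.
Qed.
End WarpedComparison.

Section Primitives.
Variable R : realType.

Lemma primitive0 (f : R -> R) (a : R) : a < 0 -> (forall x, a <= x -> {for x, continuous f}) ->
  exists F : R -> R, F 0 = 0 /\ forall x, a < x -> derivable F x 1 /\ derive1 F x = f x.
Proof.
move=> a_lt0 fcont.
pose F x := (\int[@lebesgue_measure R]_(t in [set` `[a, x]]) f t)%R.
have dF x : a < x -> derivable F x 1 /\ derive1 F x = f x.
  move=> ax; have x_lt : x < x + 1 by rewrite ltrDl.
  apply: (continuous_FTC1_closed x_lt) => //.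
  - apply: continuous_compact_integrable; first exact: segment_compact.
    apply: continuous_in_subspaceT => y; rewrite inE /= in_itv /= => /andP[y_ge _].
    exact: fcont.
  - exact: fcont (ltW ax).
exists (fun x => F x - F 0); split => [|x ax]; first by rewrite subrr.
have [dFx F'E] := dF x ax.
by have [? ->] := derive1B dFx (derivable_cst (F 0) x 1); rewrite F'E derive1_cst subr0.
Qed.

(** A bounded primitive of a nonnegative continuous function has a limit at
    [+oo], hence the function has a finite integral. *)
Lemma bounded_primitive_integral (F f : R -> R) (B : R) :
  (forall x, 0 <= x -> derivable F x 1 /\ derive1 F x = f x) ->
  {within `[0, +oo[, continuous f} -> (forall x, 0 <= x -> 0 <= f x) ->
  (forall x, 0 <= x -> F x <= B) ->
  exists l : R, (\int[@lebesgue_measure R]_(x in `[0%R, +oo[%classic) (f x)%:E = l%:E)%E.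
Proof.
move=> dF fcont f_ge0 F_le.
have F_nd : forall x y, 0 <= x -> x <= y -> F x <= F y.
  apply: ger0_derive1_ndecry => [x|x|].
  - by rewrite in_itv /= andbT => /ltW /dF[].
  - by rewrite in_itv /= andbT => /ltW x_ge0; rewrite (dF x x_ge0).2 f_ge0.
  - by apply: derivable_within_continuous => x; rewrite in_itv /= andbT => /dF[].
pose G x := F (Num.max x 0).
have G_nd : nondecreasing_fun G.
  move=> x y xy; apply: F_nd; first by rewrite le_max lexx orbT.
  by rewrite ge_max !le_max xy lexx !orbT.
have G_ub : has_ubound (range G).
  by exists B => _ [x _ <-]; apply: F_le; rewrite le_max lexx orbT.
have := nondecreasing_cvgr G_nd G_ub; set l := sup (range G) => Gl.
exists (l - F 0); rewrite EFinB.
apply: (ge0_continuous_FTC2y (F := F)) => //.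
- apply: cvg_trans Gl; apply: near_eq_cvg; near=> x.
  by rewrite /G max_l //; near: x; apply: nbhs_pinfty_ge; exact: num_real.
- by move=> x /ltW /dF[].
- apply: cvg_at_right_filter.
  exact/differentiable_continuous/derivable1_diffP/(dF 0 (lexx _)).1.
- by move=> x; rewrite in_itv /= andbT => /ltW /dF[].
Unshelve. all: by end_near.
Qed.
End Primitives.

Section WarpedMetric.
Variable R : realType.
Variables S c : R -> R.

(** The metric [S dt^2 + c^2 dθ^2]: its area density and the coefficients
    of its Laplacian in divergence form, [(k u_t)_t + m u_θθ]. *)
Definition warp_vol (t : R) : R := Num.sqrt (S t * c t ^+ 2).
Definition warp_k (t : R) : R := c t ^+ 2 / warp_vol t.
Definition warp_m (t : R) : R := S t / warp_vol t.

Lemma warp_vol_gt0 t : 0 < S t -> c t != 0 -> 0 < warp_vol t.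
Proof. by move=> S_gt0 c_neq0; rewrite sqrtr_gt0 mulr_gt0 // exprn_even_gt0. Qed.

Lemma warp_km1 t : 0 < S t -> c t != 0 -> warp_k t * warp_m t = 1.
Proof.
move=> S_gt0 c_neq0.
rewrite /warp_k /warp_m mulrACA -invfM -expr2 sqr_sqrtr; last first.
  by rewrite mulr_ge0 ?sqr_ge0 // ltW.
by rewrite [c t ^+ 2 * _]mulrC mulfV // mulf_neq0 ?sqrf_eq0 // lt0r_neq0.
Qed.

Lemma warp_mE t : 0 < S t -> c t != 0 -> warp_m t = Num.sqrt (S t) / `|c t|.
Proof.
move=> S_gt0 c_neq0; rewrite /warp_m /warp_vol sqrtrM ?sqrtr_sqr; last exact: ltW.
rewrite -{1}(sqr_sqrtr (ltW S_gt0)) expr2 invfM mulrA mulfK //.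
by rewrite lt0r_neq0 // sqrtr_gt0.
Qed.

Lemma warp_derivable t : derivable S t 1 -> derivable c t 1 -> 0 < S t -> c t != 0 ->
  derivable warp_k t 1 /\ derivable warp_m t 1.
Proof.
move=> dS dc S_gt0 c_neq0.
have [dc2 _] := derive1M dc dc.
have dvol : derivable warp_vol t 1.
  rewrite /warp_vol; under [fun y => _]funext do rewrite expr2.
  apply: derivable_sqrt; first exact: (derive1M dS dc2).1.
  by rewrite -expr2 mulr_gt0 // exprn_even_gt0.
have vol_neq0 := lt0r_neq0 (warp_vol_gt0 S_gt0 c_neq0).
split; last exact: derivable_div.
rewrite /warp_k; under [fun y => _]funext do rewrite expr2.
exact: derivable_div.
Qed.

Hypothesis S_derivable : forall t, derivable S t 1.
Hypothesis c_derivable : forall t, derivable c t 1.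
Hypothesis S_gt0 : forall t, 0 <= t -> 0 < S t.
Hypothesis c_neq0 : forall t, 0 <= t -> c t != 0.

Lemma laplace_beltrami_warped N (X : R -> R -> 'I_N -> R) (u : R -> R -> R) t th :
  0 < t ->
  (forall s b, 0 < s -> [/\ g11 X s b = S s, g12 X s b = 0 & g22 X s b = c s ^+ 2]) ->
  derivable (fun s => pd1 u s th) t 1 -> derivable (fun b => pd2 u t b) th 1 ->
  laplace_beltrami X u t th = warped_op warp_k warp_m u t th / warp_vol t.
Proof.
move=> t_gt0 metric du11 du22.
have volE s b : 0 < s -> volg X s b = warp_vol s.
  move=> s_gt0; have [g11E g12E g22E] := metric s b s_gt0.
  by rewrite /volg g11E g12E g22E expr0n subr0.
have radial : pd1 (fun a b => (g22 X a b * pd1 u a b - g12 X a b * pd2 u a b) / volg X a b) t th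
    = derive1 (fun s => warp_k s * pd1 u s th) t.
  rewrite /pd1 !derive1E; apply: near_eq_derive; near=> s.
  have s_gt0 : 0 < s by near: s; exact: lt_nbhsr.
  have [_ -> ->] := metric s th s_gt0.
  by rewrite volE // mul0r subr0 /warp_k mulrAC.
have angular : pd2 (fun a b => (g11 X a b * pd2 u a b - g12 X a b * pd1 u a b) / volg X a b) t th
    = derive1 (fun b => warp_m t * pd2 u t b) th.
  rewrite /pd2; congr (derive1 _ th); apply/funext => b.
  have [-> -> _] := metric t b t_gt0.
  by rewrite volE // mul0r subr0 /warp_m mulrAC.
have [dk dm] := warp_derivable (@S_derivable t) (@c_derivable t) (S_gt0 (ltW t_gt0))
  (c_neq0 (ltW t_gt0)).
by rewrite /laplace_beltrami radial angular (derive1M dk du11).2 (derive1Zl _ du22).2 volE.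
Unshelve. all: by end_near.
Qed.

Lemma warp_m_gt0 t : 0 <= t -> 0 < warp_m t.
Proof.
move=> t_ge0; have [St cn] := (S_gt0 t_ge0, c_neq0 t_ge0).
by rewrite warp_mE // divr_gt0 ?sqrtr_gt0 ?normr_gt0.
Qed.

Lemma warp_nondegenerate_left : exists a0, a0 < 0 /\ forall s, a0 <= s -> 0 < S s /\ c s != 0.
Proof.
have cS : S x @[x --> 0] --> S 0 by exact/differentiable_continuous/derivable1_diffP.
have cc : {for 0, continuous (fun x => c 0 * c x)}.
  exact/differentiable_continuous/derivable1_diffP/(derive1Zl (c 0) (@c_derivable 0)).1.
have cc0 : 0 < c 0 * c 0 by rewrite -expr2 exprn_even_gt0 ?c_neq0.
have S0_gt0 := S_gt0 (lexx 0).
have : \forall x \near (0:R), 0 < S x /\ 0 < c 0 * c x.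
  near=> x; split; near: x;
    [exact: (@cvgr_gt _ _ _ _ _ _ cS _ S0_gt0) | exact: (@cvgr_gt _ _ _ _ _ _ cc _ cc0)].
case=> e /= e_gt0 He; exists (- (e / 2)); split; first by rewrite oppr_lt0 divr_gt0.
move=> s s_ge; have [s_ge0|s_lt0] := leP 0 s; first by rewrite S_gt0 ?c_neq0.
have /He [/= S_gt0' cc_gt0] : ball 0 e s.
  by rewrite /ball /= sub0r normrN ltr0_norm //; lra.
by split => //; apply: contraTneq cc_gt0 => ->; rewrite mulr0 ltxx.
Unshelve. all: by end_near.
Qed.

Lemma warp_antiderivative : exists phi : R -> R,
  [/\ forall t, 0 <= t -> derivable phi t 1 /\ derive1 phi t = warp_m t,
      phi 0 = 0 & forall t s, 0 <= t -> t <= s -> phi t <= phi s].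
Proof.
have [a0 [a0_lt0 pos]] := warp_nondegenerate_left.
have [|phi [phi0 dphi]] := primitive0 a0_lt0 (f := warp_m).
  move=> s s_ge; have [St cn] := pos s s_ge.
  have [_ dm] := warp_derivable (@S_derivable s) (@c_derivable s) St cn.
  exact/differentiable_continuous/derivable1_diffP.
exists phi; split => //; first by move=> t t_ge0; apply: dphi; lra.
apply: ger0_derive1_ndecry => [x|x|].
- by rewrite in_itv /= andbT => x_gt0; apply: (dphi x _).1; lra.
- by rewrite in_itv /= andbT => x_gt0; rewrite (dphi x _).2 ?(ltW (warp_m_gt0 _)) //; lra.
- apply: derivable_within_continuous => x; rewrite in_itv /= andbT => x_ge0.
  by apply: (dphi x _).1; lra.
Qed.
Hypothesis c'_le : forall t, 0 <= t -> derive1 c t ^+ 2 <= S t.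

Lemma c_derive1_le t : 0 <= t -> c t * derive1 c t <= c t ^+ 2 * warp_m t.
Proof.
move=> t_ge0; have [St cn] := (S_gt0 t_ge0, c_neq0 t_ge0).
have c_gt0 : 0 < `|c t| by rewrite normr_gt0.
rewrite warp_mE //.
have -> : c t ^+ 2 * (Num.sqrt (S t) / `|c t|) = `|c t| * Num.sqrt (S t).
  by rewrite -real_normK ?num_real //; field; exact: lt0r_neq0.
apply: le_trans (ler_norm _) _; rewrite normrM ler_pM2l //.
by rewrite -sqrtr_sqr; apply: ler_wsqrtr; exact: c'_le.
Qed.

Variable phi : R -> R.
Hypothesis phi'E : forall t, 0 <= t -> derivable phi t 1 /\ derive1 phi t = warp_m t.
Hypothesis phi0 : phi 0 = 0.

(** [|c'| <= sqrt S = m |c|] integrates to [|c| <= |c 0| e^phi]. *)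
Lemma radius_growth t : 0 <= t -> c t ^+ 2 <= c 0 ^+ 2 * expR (2 * phi t).
Proof.
move=> t_ge0.
pose K y := c y * c y * expR (-2 * phi y).
have dK y : 0 <= y -> derivable K y 1 /\ derive1 K y <= 0.
  move=> y_ge0; have [dphi phi'y] := phi'E y_ge0.
  have [d1 e1] := derive1Zl (-2) dphi.
  have [d2 e2] := derive1_expR d1.
  have [d3 e3] := derive1M (@c_derivable y) (@c_derivable y).
  have [d4 ->] := derive1M d3 d2.
  split => //; rewrite e3 e2 e1 phi'y.
  have := c_derive1_le y_ge0; rewrite expr2.
  have := expR_gt0 (-2 * phi y).
  set E := expR _; set D := derive1 c y; set M := warp_m y => E_gt0 cD_le.
  have -> : (D * c y + c y * D) * E + c y * c y * (E * (-2 * M)) =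
    (2 * E) * (c y * D - c y * c y * M) by ring.
  by apply: mulr_ge0_le0; lra.
have : K t <= K 0.
  apply: (ler0_derive1_nincry (a := 0)) => // [y|y|].
  - by rewrite in_itv /= andbT => /ltW y_ge0; exact: (dK y y_ge0).1.
  - by rewrite in_itv /= andbT => /ltW y_ge0; exact: (dK y y_ge0).2.
  - apply: derivable_within_continuous => y; rewrite in_itv /= andbT => y_ge0.
    exact: (dK y y_ge0).1.
rewrite /K phi0 mulr0 expR0 mulr1 -!expr2 mulNr expRN.
by rewrite ler_pdivrMr // expR_gt0.
Qed.

Hypothesis length_infinite :
  (\int[@lebesgue_measure R]_(t in `[0%R, +oo[%classic) (Num.sqrt (S t))%:E = +oo)%E.

(** If [phi < B], then [sqrt S <= (|c 0| e^phi)'] would have a finite integral. *)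
Lemma antiderivative_unbounded B : exists T, 0 <= T /\ B <= phi T.
Proof.
apply: contrapT => /forallNP phi_lt.
have {}phi_lt T : 0 <= T -> phi T < B.
  by move=> T_ge0; rewrite ltNge; apply/negP => B_le; apply: (phi_lt T).
pose a := `|c 0|.
have a_gt0 : 0 < a by rewrite normr_gt0 c_neq0.
pose E x := a * expR (phi x).
pose E' x := a * (expR (phi x) * warp_m x).
have dE x : 0 <= x -> derivable E x 1 /\ derive1 E x = E' x.
  move=> x_ge0; have [dphi phi'x] := phi'E x_ge0.
  have [d1 e1] := derive1_expR dphi.
  by have [d2 ->] := derive1Zl a d1; rewrite e1 phi'x.
have dE' x : 0 <= x -> derivable E' x 1.
  move=> x_ge0; have [St cn] := (S_gt0 x_ge0, c_neq0 x_ge0).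
  have [_ dm] := warp_derivable (@S_derivable x) (@c_derivable x) St cn.
  exact: (derive1Zl a (derive1M (derive1_expR (phi'E x_ge0).1).1 dm).1).1.
have E'_ge0 x : 0 <= x -> 0 <= E' x.
  move=> x_ge0; apply: mulr_ge0; first exact: ltW.
  by apply: mulr_ge0; [exact: expR_ge0 | exact/ltW/warp_m_gt0].
have sqrtS_le x : 0 <= x -> Num.sqrt (S x) <= E' x.
  move=> x_ge0; have [St cn] := (S_gt0 x_ge0, c_neq0 x_ge0).
  have c_le : `|c x| <= a * expR (phi x).
    rewrite -(ler_pXn2r (_ : (0 < 2)%N)) ?nnegrE ?mulr_ge0 ?expR_ge0 ?(ltW a_gt0) //.
    by rewrite exprMn !real_normK ?num_real // -expRM_natl; exact: radius_growth.
  have -> : Num.sqrt (S x) = warp_m x * `|c x|.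
    by rewrite warp_mE // mulrAC mulfK // normr_eq0.
  by rewrite /E' mulrA [X in _ <= X]mulrC ler_pM2l ?warp_m_gt0.
have E'cont : {within `[0, +oo[, continuous E'}.
  by apply: derivable_within_continuous => x; rewrite in_itv /= andbT; exact: dE'.
have E_le x : 0 <= x -> E x <= a * expR B.
  by move=> x_ge0; rewrite ler_pM2l // ler_expR ltW ?phi_lt.
have [l intE'] := bounded_primitive_integral dE E'cont E'_ge0 E_le.
have : (\int[@lebesgue_measure R]_(x in `[0%R, +oo[%classic) (Num.sqrt (S x))%:E
   <= \int[@lebesgue_measure R]_(x in `[0%R, +oo[%classic) (E' x)%:E)%E.
  apply: ge0_le_integral => //; try exact: measurable_itv.
  - apply/measurable_realfun.measurable_EFinP.
    apply: measurable_realfun.subspace_continuous_measurable_fun; first exact: measurable_itv.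
    apply: continuous_subspaceT => x; apply: continuous_comp; last exact: sqrt_continuous.
    exact/differentiable_continuous/derivable1_diffP.
  - apply/measurable_realfun.measurable_EFinP.
    apply: measurable_realfun.subspace_continuous_measurable_fun; first exact: measurable_itv.
    exact: E'cont.
  - by move=> x; rewrite /= in_itv /= andbT => x_ge0; rewrite lee_fin; exact: sqrtS_le.
by rewrite length_infinite intE' leye_eq.
Unshelve. all: by end_near.
Qed.
End WarpedMetric.

Lemma parabolic_end_of_warped_metric (R : realType) N (X : R -> R -> 'I_N -> R)
    (S c : R -> R) :
  (forall s b, 0 < s -> [/\ g11 X s b = S s, g12 X s b = 0 & g22 X s b = c s ^+ 2]) ->
  (forall t, derivable S t 1) -> (forall t, derivable c t 1) ->
  (forall t, 0 <= t -> 0 < S t) -> (forall t, 0 <= t -> c t != 0) ->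
  (forall t, 0 <= t -> derive1 c t ^+ 2 <= S t) ->
  (\int[@lebesgue_measure R]_(t in `[0%R, +oo[%classic) (Num.sqrt (S t))%:E = +oo)%E ->
  parabolic_end X.
Proof.
move=> metric dS dc S_gt0 c_neq0 c'_le length_infinite.
have [phi [phi'E phi0 phi_nd]] := warp_antiderivative dS dc S_gt0 c_neq0.
have phi_unb := antiderivative_unbounded dS dc S_gt0 c_neq0 c'_le phi'E phi0 length_infinite.
have pos t : 0 < t -> 0 < S t /\ c t != 0 by move=> /ltW t_ge0; split; auto.
have k_gt0 t : 0 < t -> 0 < warp_k S c t.
  by move=> /pos[St cn]; rewrite divr_gt0 ?exprn_even_gt0 ?warp_vol_gt0.
have m_gt0 t : 0 < t -> 0 < warp_m S c t by move=> /ltW; exact: warp_m_gt0.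
have kd t : 0 < t -> derivable (warp_k S c) t 1.
  by move=> /pos[St cn]; case: (warp_derivable (dS t) (dc t) St cn).
have md t : 0 < t -> derivable (warp_m S c) t 1.
  by move=> /pos[St cn]; case: (warp_derivable (dS t) (dc t) St cn).
have km1 t : 0 < t -> warp_k S c t * warp_m S c t = 1 by move=> /pos[]; exact: warp_km1.
have phi_d t : 0 <= t -> derivable phi t 1 by move=> /phi'E[].
have phi'm t : 0 < t -> derive1 phi t = warp_m S c t by move=> /ltW /phi'E[].
have solution u : bounded_on_end u -> harmonic_on_end X u ->
    warped_harmonic (warp_k S c) (warp_m S c) u.
  move=> bu [per cont C2 lap]; split => // t th t_gt0.
  have [uder _ _ _ _] := C2; have [_ _ du11 _ [_ du22]] := uder t th t_gt0.
  have [St cn] := pos t t_gt0.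
  move: (lap t th t_gt0).
  rewrite (laplace_beltrami_warped dS dc S_gt0 c_neq0 t_gt0 metric du11 du22).
  by move/eqP; rewrite mulf_eq0 invr_eq0 (gt_eqF (warp_vol_gt0 St cn)) orbF => /eqP.
move=> u v bu bv hu hv uv0 t th t_ge0.
have cmp := warped_comparison k_gt0 m_gt0 kd md km1 phi_d phi'm phi0 phi_nd phi_unb.
have [su sv] := (solution u bu hu, solution v bv hv).
apply/eqP; rewrite eq_le (cmp u v) ?(cmp v u) // => b; exact/esym.
Qed.

Section Revolution.
Variable R : realType.

Lemma derive1_dotvl N (w : R -> 'I_N -> R) (a : 'I_N -> R) t :
  (forall k, derivable (fun s => w s k) t 1) ->
  derivable (fun s => dotv (w s) a) t 1 /\
  derive1 (fun s => dotv (w s) a) t = dotv (fun k => derive1 (fun s => w s k) t) a.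
Proof.
move=> dw; rewrite [fun s => _](_ : _ = \sum_(k < N) (fun s => w s k * a k)); last first.
  by rewrite fct_sumE.
have dk k : is_derive t 1 (fun s => w s k * a k) (derive1 (fun s => w s k) t * a k).
  by apply: DeriveDef; [exact: derivableM | rewrite -derive1E derive1Mr].
have D := is_derive_sum dk; split; first exact: (@ex_derive _ _ _ _ _ _ _ D).
by rewrite derive1E (@derive_val _ _ _ _ _ _ _ D).
Qed.

Lemma derivable_dotvv N (w : R -> 'I_N -> R) t :
  (forall k, derivable (fun s => w s k) t 1) -> derivable (fun s => dotv (w s) (w s)) t 1.
Proof.
move=> dw; rewrite [fun s => _](_ : _ = \sum_(k < N) (fun s => w s k * w s k)); last first.
  by rewrite fct_sumE.
by apply: derivable_sum => k; exact: derivableM.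
Qed.

Lemma smooth_curve_derivable N (beta : R -> 'I_N -> R) : smooth_curve beta ->
  forall k t, derivable (fun s => beta s k) t 1 /\ derivable (fun s => velocity beta s k) t 1.
Proof. by move=> beta_smooth k t; split; [exact: (beta_smooth k 0) | exact: (beta_smooth k 1)]. Qed.

(** The rotation by [th] in the plane of the orthonormal pair [(e1, e2)],
    fixing its orthogonal complement. *)
Definition plane_rotation N (e1 e2 : 'I_N -> R) (th : R) (q : 'I_N -> R) : 'I_N -> R :=
  fun k => q k + ((cos th - 1) * dotv q e1 - sin th * dotv q e2) * e1 k
               + (sin th * dotv q e1 + (cos th - 1) * dotv q e2) * e2 k.

Definition revolution N (p e1 e2 : 'I_N -> R) (beta : R -> 'I_N -> R) (t th : R) :
    'I_N -> R :=
  fun k => p k + plane_rotation e1 e2 th (fun i => beta t i - p i) k.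

Variables (N : nat) (p e1 e2 : 'I_N -> R) (beta : R -> 'I_N -> R).
Hypothesis e11 : dotv e1 e1 = 1.
Hypothesis e22 : dotv e2 e2 = 1.
Hypothesis e12 : dotv e1 e2 = 0.
Hypothesis beta_smooth : smooth_curve beta.
Hypothesis beta_planar : forall t, 0 <= t -> dotv (fun i => beta t i - p i) e2 = 0.

Let beta_derivable k t := (smooth_curve_derivable beta_smooth k t).1.
Let X := revolution p e1 e2 beta.
Let C (e : 'I_N -> R) (t : R) := dotv (fun i => beta t i - p i) e.

Lemma derive1_coord e t : derivable (C e) t 1 /\ derive1 (C e) t = dotv (velocity beta t) e.
Proof.
have dw k : derivable (fun s => beta s k - p k) t 1 /\
    derive1 (fun s => beta s k - p k) t = velocity beta t k.
  have [? ->] := derive1B (@beta_derivable k t) (derivable_cst (p k) t 1).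
  by rewrite derive1_cst subr0.
have [? ->] := derive1_dotvl e (fun k => (dw k).1).
by split=> //; congr dotv; apply/funext => k; exact: (dw k).2.
Qed.

Lemma revolutionE t th k : 0 <= t ->
  X t th k = beta t k + C e1 t * ((cos th - 1) * e1 k + sin th * e2 k).
Proof. by move=> t_ge0; rewrite /X /revolution /plane_rotation beta_planar // /C; ring. Qed.

Lemma revolution_metric t th : 0 < t ->
  [/\ g11 X t th = dotv (velocity beta t) (velocity beta t), g12 X t th = 0 &
      g22 X t th = C e1 t ^+ 2].
Proof.
move=> t_gt0; have [dC1 C1'E] := derive1_coord e1 t.
have C2'0 : dotv (velocity beta t) e2 = 0.
  rewrite -(derive1_coord e2 t).2; apply: (derive1_near_cst (a := 0)); near=> s.
  by apply: beta_planar; apply: ltW; near: s; exact: lt_nbhsr.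
set C1' := derive1 (C e1) t in C1'E.
have pd1E : (fun k => pd1 (fun a b => X a b k) t th) = fun k =>
    velocity beta t k + (C1' * (cos th - 1)) * e1 k + (C1' * sin th) * e2 k.
  apply/funext => k; set a := (cos th - 1) * e1 k + sin th * e2 k.
  have Xnear : \forall s \near t, X s th k = beta s k + C e1 s * a.
    by near=> s; apply: revolutionE; apply: ltW; near: s; exact: lt_nbhsr.
  rewrite /pd1 derive1E (near_eq_derive _ Xnear) -derive1E.
  have [_ ->] := derive1D (@beta_derivable k t) (derivableM dC1 (derivable_cst a t 1)).
  by rewrite derive1Mr // -/C1' /a /velocity; ring.
have pd2E : (fun k => pd2 (fun a b => X a b k) t th) = fun k =>
    0 + (- sin th * C e1 t) * e1 k + (cos th * C e1 t) * e2 k.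
  apply/funext => k; rewrite /pd2 (_ : (fun b => X t b k) = fun b =>
      (beta t k - C e1 t * e1 k) + cos b * (C e1 t * e1 k) + sin b * (C e1 t * e2 k)).
    by rewrite derive1_cos_sin; ring.
  by apply/funext => b; rewrite revolutionE ?(ltW t_gt0) //; ring.
have cs := cos2Dsin2 th.
rewrite /g11 /g12 /g22 pd1E pd2E !dotv_plane // !(dotvC (fun=> 0)) !dotv0r.
rewrite !(dotvC e1) !(dotvC e2) -C1'E C2'0; set v := velocity beta t.
split.
- transitivity (dotv v v + C1' ^+ 2 * (cos th ^+ 2 + sin th ^+ 2 - 1)); first by ring.
  by rewrite cs subrr mulr0 addr0.
- by ring.
- by rewrite -[C e1 t ^+ 2]mulr1 -cs; ring.
Unshelve. all: by end_near.
Qed.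

Lemma parabolic_revolution_end : regular_curve beta -> infinite_length beta ->
  (forall t, 0 <= t -> C e1 t != 0) -> parabolic_end X.
Proof.
move=> beta_regular beta_infinite c_neq0.
apply: (parabolic_end_of_warped_metric (S := fun t => dotv (velocity beta t) (velocity beta t))
  (c := C e1)) => //.
- exact: revolution_metric.
- by move=> t; apply: derivable_dotvv => k; exact: (smooth_curve_derivable beta_smooth k t).2.
- by move=> t; exact: (derive1_coord e1 t).1.
- by move=> t t_ge0; exact: dotv_gt0 (beta_regular t t_ge0).
- by move=> t _; rewrite (derive1_coord e1 t).2; exact: dotv_unit_sqr_le.
Qed.
End Revolution.

Section SpaceForms.
Variable R : realType.

Lemma unit_circle_angle (x y : R) : x ^+ 2 + y ^+ 2 = 1 ->
  exists s, cos s = x /\ sin s = y.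
Proof.
move=> xy1; have x_le1 : `|x| <= 1.
  rewrite -(ler_pXn2r (_ : (0 < 2)%N)) ?nnegrE // expr1n real_normK ?num_real //.
  by rewrite -xy1 lerDl sqr_ge0.
have cos_acos : cos (acos x) = x by rewrite acosK // in_itv /= -ler_norml.
have sin_acos : sin (acos x) = `|y|.
  by rewrite sin_acos -?ler_norml // -sqrtr_sqr -xy1 addrAC subrr add0r.
have [y_ge0|y_lt0] := leP 0 y.
  by exists (acos x); rewrite cos_acos sin_acos ger0_norm.
by exists (- acos x); rewrite cosN sinN cos_acos sin_acos ltr0_norm ?opprK.
Qed.

Lemma immersionE_revolution (p e1 e2 e3 : 'I_3 -> R) (beta : R -> 'I_3 -> R) :
  orthonormal3 e1 e2 e3 -> immersionE p e1 e2 e3 beta = revolution p e1 e2 beta.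
Proof.
move=> ON; apply/funext => t; apply/funext => th; apply/funext => k.
rewrite /immersionE /rotE /revolution /plane_rotation /=.
by rewrite (orthonormal3_expand (fun i => beta t i - p i) k ON); ring.
Qed.

Lemma euclid_parabolic (p e1 e2 e3 : 'I_3 -> R) (beta : R -> 'I_3 -> R) :
  orthonormal3 e1 e2 e3 -> euclid_end_data p e1 e2 e3 beta ->
  parabolic_end (immersionE p e1 e2 e3 beta).
Proof.
move=> ON [beta_smooth beta_regular beta_infinite beta_planar beta_off_axis].
have [e11 e22 e33 [e12 _ _]] := ON.
rewrite immersionE_revolution //.
apply: parabolic_revolution_end => // t t_ge0; apply/eqP => c0.
apply: (beta_off_axis t t_ge0 (dotv (fun i => beta t i - p i) e3)); apply/funext => k.
have := orthonormal3_expand (fun i => beta t i - p i) k ON.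
by rewrite /= c0 beta_planar // !mul0r !add0r => <-; rewrite addrC subrK.
Qed.

Lemma immersionS_revolution (e1 e2 e3 e4 : 'I_4 -> R) (beta : R -> 'I_4 -> R) :
  orthonormal4 e1 e2 e3 e4 -> immersionS e1 e2 e3 e4 beta = revolution (fun _ => 0) e1 e2 beta.
Proof.
move=> ON; apply/funext => t; apply/funext => th; apply/funext => k.
rewrite /immersionS /Defs.rotS /revolution /plane_rotation /=.
rewrite (_ : (fun i => beta t i - 0) = beta t); last by apply/funext => i; rewrite subr0.
by rewrite (orthonormal4_expand (beta t) k ON); ring.
Qed.

Lemma sphere_parabolic (e1 e2 e3 e4 : 'I_4 -> R) (beta : R -> 'I_4 -> R) :
  orthonormal4 e1 e2 e3 e4 -> sphere_end_data e1 e2 e3 e4 beta ->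
  parabolic_end (immersionS e1 e2 e3 e4 beta).
Proof.
move=> ON [beta_smooth beta_regular beta_infinite beta_sphere beta_off_axis].
have [e11 e22 _ _ [e12 _ _ _ _]] := ON.
have betaE t : (fun i => beta t i - 0) = beta t by apply/funext => i; rewrite subr0.
rewrite immersionS_revolution //.
apply: parabolic_revolution_end => // [t t_ge0|t t_ge0]; rewrite betaE.
  exact: (beta_sphere t t_ge0).2.
apply/eqP => c0; have [beta1 beta_e2] := beta_sphere t t_ge0.
have [s [cs sn]] : exists s, cos s = dotv (beta t) e3 /\ sin s = dotv (beta t) e4.
  apply: unit_circle_angle.
  by move: beta1; rewrite (orthonormal4_dotvv _ ON) c0 beta_e2 expr0n !add0r.
apply: (beta_off_axis t t_ge0 s); apply/funext => k.
by rewrite (orthonormal4_expand (beta t) k ON) c0 beta_e2 cs sn !mul0r !add0r.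
Qed.
End SpaceForms.

Unset Implicit Arguments.

Theorem theoremA (R : realType) :
  (forall (p e1 e2 e3 : 'I_3 -> R) (beta : R -> 'I_3 -> R),
      orthonormal3 e1 e2 e3 -> euclid_end_data p e1 e2 e3 beta ->
      parabolic_end (immersionE p e1 e2 e3 beta)) /\
  (forall (e1 e2 e3 e4 : 'I_4 -> R) (beta : R -> 'I_4 -> R),
      orthonormal4 e1 e2 e3 e4 -> sphere_end_data e1 e2 e3 e4 beta ->
      parabolic_end (immersionS e1 e2 e3 e4 beta)).
Proof. by split; [exact: euclid_parabolic | exact: sphere_parabolic]. Qed.
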